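(* Let $F\subset S^3$ be a (connected, oriented) Seifert surface for a knot or link $K$ with $\operatorname{rank}H_1(F;\mathbb Z)=n$, and let $\alpha_1,\dots,\alpha_n$ be pairwise disjoint properly embedded arcs in $F$ such that $F\setminus\bigcup_i\alpha_i$ is a disk. For integers $k_1,\dots,k_n$, let $\widetilde F$ be the surface obtained from $F$ by full-twisting $F$ along each arc $\alpha_i$ exactly $k_i$ times, in the direction for which the Seifert form value of the loop $\ell_i$ dual to $\alpha_i$ (the embedded loop meeting $\bigcup_j\alpha_j$ transversely in exactly one point of $\alpha_i$) increases by $k_i$; and let $\widetilde K=\partial\widetilde F$. Then there exist positive integers $N_1,\dots,N_n$ such that whenever $k_i\ge N_i$ for all $i$, the Alexander polynomial of $\widetilde K$ has degree $n$ and all of its zeros have modulus $1$.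
   Context: The (reduced) Alexander polynomial of a knot or link with Seifert matrix $V$ is $\det(tV-V^T)$. Twisting along $\alpha_i$ changes only the self-linking of $\ell_i$, so a Seifert matrix of $\widetilde F$ with respect to the dual loops is obtained from one of $F$ by adding $k_i$ to the $i$-th diagonal entry. *)

From HB Require Import structures.
From mathcomp Require Import all_boot all_order all_algebra all_field.
Set Implicit Arguments. Unset Strict Implicit. Unset Printing Implicit Defensive.
Import Order.TTheory GRing.Theory Num.Theory.
Local Open Scope ring_scope.

Definition alexander_poly (n : nat) (V : 'M[int]_n) : {poly int} :=
  \det ('X *: map_mx polyC V - map_mx polyC V^T).

(* Seifert matrix of the twisted surface w.r.t. the dual loops:
   k_i added to the i-th diagonal entry. *)
Definition twist_seifert (n : nat) (V : 'M[int]_n) (k : 'I_n -> int) : 'M[int]_n :=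
  V + diag_mx (\row_i k i).

From HB Require Import structures.
From mathcomp Require Import all_boot all_order all_algebra all_field.
Import Order.TTheory GRing.Theory Num.Theory.
Set Implicit Arguments. Unset Strict Implicit. Unset Printing Implicit Defensive.
Local Open Scope ring_scope.

(* Let A be the complexified Seifert matrix of the twisted
   surface and  <v, A> = sum_ij v_i A_ij conj(v_j)  its sesquilinear form.
   Twisting adds k_i to the diagonal, so  <v, A> = <v, V> + sum_i k_i |v_i|^2
   and  |<v, V>| <= (sum_ij |V_ij|) * sum_i |v_i|^2.  Hence once every k_i
   exceeds the total mass  sum_ij |V_ij|,  the form never vanishes on v <> 0.
   For a real matrix A with this property:
   - A is invertible (a kernel vector would give <v, A> = 0), so
     det(tA - A^T) = det A * char_poly(A^T A^-1) has degree exactly n;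
   - if det(zA - A^T) = 0 with  v (zA - A^T) = 0,  v <> 0,  then
     z <v, A> = <v, A^T> = conj <v, A>,  so |z| = 1.
   The file first develops the form  sesq,  then the generic polynomial
   det(tA - A^T) over any commutative ring, then the consequences of a
   nonvanishing form, and finally specializes to the twisted Seifert matrix. *)

Definition sesq (n : nat) (A : 'M[algC]_n) (v : 'rV[algC]_n) : algC :=
  \sum_i \sum_j v 0 i * A i j * (v 0 j)^*.

Definition sqnorm (n : nat) (v : 'rV[algC]_n) : algC := \sum_i `|v 0 i| ^+ 2.

Definition mass (n : nat) (A : 'M[algC]_n) : algC := \sum_i \sum_j `|A i j|.

Section SesquilinearForm.
Variable n : nat.
Implicit Types (A B : 'M[algC]_n) (v : 'rV[algC]_n).

Lemma sesq_linear (a b : algC) A B v :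
  sesq (a *: A + b *: B) v = a * sesq A v + b * sesq B v.
Proof.
rewrite /sesq !mulr_sumr -big_split; apply: eq_bigr => i _.
rewrite !mulr_sumr -big_split; apply: eq_bigr => j _.
by rewrite !mxE mulrDr mulrDl !mulrA [v 0 i * a]mulrC [v 0 i * b]mulrC.
Qed.

Lemma sesq_mulmx A v : sesq A v = \sum_j (v *m A) 0 j * (v 0 j)^*.
Proof.
rewrite /sesq exchange_big; apply: eq_bigr => j _.
by rewrite mxE mulr_suml.
Qed.

Lemma sesq_ker A v : v *m A = 0 -> sesq A v = 0.
Proof. by move=> vA; rewrite sesq_mulmx vA big1 // => j _; rewrite mxE mul0r. Qed.

Lemma sesq_trC A v : map_mx Num.conj A = A -> sesq A^T v = (sesq A v)^*.
Proof.
move=> realA; rewrite /sesq rmorph_sum exchange_big; apply: eq_bigr => i _.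
rewrite rmorph_sum; apply: eq_bigr => j _.
rewrite !rmorphM /= conjCK mxE -[in RHS]realA mxE conjCK.
by rewrite mulrC [v 0 j * _]mulrC mulrA.
Qed.

Lemma sesq_diag (d : 'rV[algC]_n) v :
  sesq (diag_mx d) v = \sum_i d 0 i * `|v 0 i| ^+ 2.
Proof.
apply: eq_bigr => i _; rewrite (bigD1 i) //= big1 => [|j ji].
  by rewrite mxE eqxx mulr1n addr0 normCK mulrAC mulrC.
by rewrite mxE eq_sym (negbTE ji) mulr0n mulr0 mul0r.
Qed.

Lemma sqnorm_gt0 v : v != 0 -> 0 < sqnorm v.
Proof.
move=> v0; rewrite lt0r sumr_ge0 ?andbT => [|i _]; last exact: exprn_ge0.
apply: contra v0 => /eqP S0; apply/eqP/matrixP => a b; rewrite ord1 !mxE.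
have /eqP : `|v 0 b| ^+ 2 = 0 by apply: (psumr_eq0P _ S0) => // i _; exact: exprn_ge0.
by rewrite expf_eq0 /= normr_eq0 => /eqP.
Qed.

(* Cauchy-type bound: each |v_i v_j| <= (|v_i|^2 + |v_j|^2)/2 <= sqnorm v. *)
Lemma sesq_norm_le A v : `|sesq A v| <= mass A * sqnorm v.
Proof.
rewrite mulr_suml; apply: le_trans (ler_norm_sum _ _ _) (ler_sum _ _) => i _.
rewrite mulr_suml; apply: le_trans (ler_norm_sum _ _ _) (ler_sum _ _) => j _.
have sq_le l : `|v 0 l| ^+ 2 <= sqnorm v.
  rewrite /sqnorm (bigD1 l) //= lerDl.
  by apply: sumr_ge0 => m _; exact: exprn_ge0.
rewrite !normrM norm_conjC mulrAC [X in _ <= X]mulrC.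
apply: ler_wpM2r; first exact: normr_ge0.
apply: le_trans (real_leif_mean_square (normr_real _) (normr_real _)).1 _.
by rewrite ler_pdivrMr ?ltr0n // mulr_natr mulr2n lerD.
Qed.

Lemma sesq_diag_dominant A (d : 'rV[algC]_n) v :
  (forall i, mass A + 1 <= d 0 i) -> v != 0 -> sesq (A + diag_mx d) v != 0.
Proof.
move=> dom v0; have S0 := sqnorm_gt0 v0.
have lower : (mass A + 1) * sqnorm v <= sesq (diag_mx d) v.
  rewrite sesq_diag mulr_sumr; apply: ler_sum => i _.
  by apply: ler_wpM2r; [exact: exprn_ge0 | exact: dom].
have mass_ge0 : 0 <= mass A by do 2!apply: sumr_ge0 => ? _; exact: normr_ge0.
have diag_ge0 : 0 <= sesq (diag_mx d) v.
  by apply: le_trans lower; apply: mulr_ge0; [exact: addr_ge0 | exact: ltW].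
rewrite -[A]scale1r -[diag_mx d]scale1r sesq_linear !mul1r; apply/eqP => /eqP.
rewrite addrC addr_eq0 => /eqP sA.
have : (mass A + 1) * sqnorm v <= mass A * sqnorm v.
  apply: le_trans lower _.
  by rewrite -(ger0_norm diag_ge0) sA normrN sesq_norm_le.
by rewrite ler_pM2r // gerDl ler10.
Qed.

End SesquilinearForm.

Definition seifert_det (R : comNzRingType) (n : nat) (A : 'M[R]_n) : {poly R} :=
  \det ('X *: map_mx polyC A - map_mx polyC A^T).

Lemma map_seifert_det (R S : comNzRingType) (f : {rmorphism R -> S}) n
    (A : 'M[R]_n) :
  map_poly f (seifert_det A) = seifert_det (map_mx f A).
Proof.
rewrite /seifert_det -det_map_mx; congr (\det _); apply/matrixP => i j.
by rewrite !mxE rmorphB rmorphM /= map_polyX !map_polyC.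
Qed.

Lemma horner_seifert_det (R : comNzRingType) n (A : 'M[R]_n) (z : R) :
  (seifert_det A).[z] = \det (z *: A - A^T).
Proof.
rewrite -[LHS]/(horner_eval z _) -det_map_mx; congr (\det _).
by apply/matrixP => i j; rewrite !mxE /= horner_evalE !hornerE.
Qed.

Lemma seifert_det_char (F : fieldType) n (A : 'M[F]_n) : A \in unitmx ->
  seifert_det A = char_poly (A^T *m invmx A) * (\det A)%:P.
Proof.
move=> uA; rewrite /seifert_det /char_poly -det_map_mx -det_mulmx.
by congr (\det _); rewrite /char_poly_mx mulmxBl mul_scalar_mx -map_mxM mulmxKV.
Qed.

Lemma size_seifert_det (F : fieldType) n (A : 'M[F]_n) : A \in unitmx ->
  size (seifert_det A) = n.+1.
Proof.
move=> uA; rewrite seifert_det_char // mulrC mul_polyC size_scale ?size_char_poly //.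
by rewrite -unitfE -unitmxE.
Qed.

Section NondegenerateForm.
Variables (n : nat) (A : 'M[algC]_n).
Hypothesis nondeg : forall v, v != 0 -> sesq A v != 0.

Lemma nondeg_unitmx : A \in unitmx.
Proof.
rewrite unitmxE unitfE; apply/negP => /det0P [v v0 vA].
by move/eqP: (nondeg v0); rewrite sesq_ker.
Qed.

(* A root z of det(tA - A^T) satisfies  z <v, A> = <v, A^T> = conj <v, A>. *)
Lemma nondeg_root_norm1 (z : algC) :
  map_mx Num.conj A = A -> root (seifert_det A) z -> `|z| = 1.
Proof.
move=> realA; rewrite /root horner_seifert_det => /det0P [v v0 vAz].
have eigen : z * sesq A v = (sesq A v)^*.
  apply/eqP; rewrite -subr_eq0 -sesq_trC // -mulN1r -sesq_linear scaleN1r.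
  by rewrite sesq_ker.
have nz : `|sesq A v| != 0 by rewrite normr_eq0 nondeg.
by apply: (mulIf nz); rewrite -normrM eigen norm_conjC mul1r.
Qed.

End NondegenerateForm.

Lemma int_mx_real (n : nat) (W : 'M[int]_n) :
  map_mx Num.conj (map_mx intr W : 'M[algC]_n) = map_mx intr W.
Proof. by apply/matrixP => i j; rewrite !mxE conj_intr. Qed.

Section TwistedSeifertMatrix.
Variables (n : nat) (V : 'M[int]_n).

Definition int_mass : nat := \sum_i \sum_j `|V i j|%N.

Lemma mass_int_mx : mass (map_mx intr V : 'M[algC]_n) = int_mass%:R.
Proof.
rewrite /mass /int_mass natr_sum; apply: eq_bigr => i _.
by rewrite natr_sum; apply: eq_bigr => j _; rewrite mxE natr_absz intr_norm.
Qed.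

Lemma twist_seifertE (k : 'I_n -> int) :
  map_mx intr (twist_seifert V k) =
  map_mx intr V + diag_mx (\row_i ((k i)%:~R : algC)).
Proof.
apply/matrixP => i j; rewrite !mxE intrD; congr (_ + _).
by case: eqP => [->|_]; rewrite ?mulr1n ?mulr0n.
Qed.

Lemma twist_nondeg (k : 'I_n -> int) :
  (forall i, int_mass.+1%:Z <= k i) -> forall v, v != 0 ->
  sesq (map_mx intr (twist_seifert V k) : 'M[algC]_n) v != 0.
Proof.
move=> hk v v0; rewrite twist_seifertE; apply: sesq_diag_dominant v0 => i.
rewrite mass_int_mx mxE natr1 pmulrn ler_int; exact: hk.
Qed.

End TwistedSeifertMatrix.

Theorem theorem12p9 (n : nat) (V : 'M[int]_n) :
  exists N : 'I_n -> nat,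
    (forall i, (0 < N i)%N) /\
    forall k : 'I_n -> int,
      (forall i, (N i)%:Z <= k i) ->
      size (alexander_poly (twist_seifert V k)) = n.+1 /\
      forall z : algC,
        root (map_poly intr (alexander_poly (twist_seifert V k))) z ->
        `|z| = 1.
Proof.
exists (fun _ => (int_mass V).+1); split => // k hk.
have nondeg := twist_nondeg hk.
rewrite /alexander_poly -/(seifert_det _); split.
  rewrite -(size_map_inj_poly (f := intr : int -> algC) intr_inj) //.
  by rewrite map_seifert_det size_seifert_det // (nondeg_unitmx nondeg).
move=> z; rewrite map_seifert_det; apply: (nondeg_root_norm1 nondeg).
exact: int_mx_real.
Qed.
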